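(* Let $A \in \mathbb{R}^{m \times n}$, $B \in \mathbb{R}^{n \times m}$, and $p := \min\{m,n\}$. Then there exist matrices $V \in \mathbb{R}^{m \times p}$ and $U \in \mathbb{R}^{n \times p}$ with orthonormal columns (i.e. $V^T V = U^T U = I_p$), and upper Hessenberg matrices $H \in \mathbb{R}^{p \times p}$ and $F \in \mathbb{R}^{p \times p}$ whose subdiagonal entries are all nonnegative, such that \[ V^T A U = H \quad\text{and}\quad U^T B V = F. \]
   Context: A square matrix $H=(h_{i,j})$ is upper Hessenberg if $h_{i,j}=0$ whenever $i > j+1$; its subdiagonal entries are $h_{j+1,j}$. *)

From HB Require Import structures.
From mathcomp Require Import all_boot all_order all_algebra.
From mathcomp Require Import reals.
Set Implicit Arguments. Unset Strict Implicit. Unset Printing Implicit Defensive.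
Import Order.TTheory GRing.Theory Num.Theory.
Local Open Scope ring_scope.

Definition upper_hessenberg (R : ringType) (p : nat) (H : 'M[R]_p) : Prop :=
  forall i j : 'I_p, (j.+1 < i)%N -> H i j = 0.

Definition nonneg_subdiag (R : numDomainType) (p : nat) (H : 'M[R]_p) : Prop :=
  forall i j : 'I_p, (nat_of_ord i = j.+1)%N -> 0 <= H i j.

From HB Require Import structures.
From mathcomp Require Import all_boot all_order all_algebra.
From mathcomp Require Import reals.
From mathcomp Require Import ring.
Set Implicit Arguments. Unset Strict Implicit. Unset Printing Implicit Defensive.
Import Order.TTheory GRing.Theory Num.Theory.
Local Open Scope ring_scope.

(* For square orthogonal P and Q one can make P^T A Q and Q^T B P (rectangular)
   upper Hessenberg with nonnegative subdiagonal and, at the same time, send two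
   prescribed vectors x, y to nonnegative multiples of e_0.  Induction: Householder
   reflections P0, Q0 take care of x and y, and the recursive call on the trailing
   blocks of P0^T A Q0 and Q0^T B P0 is asked to send the first columns of their
   lower-left blocks to nonnegative multiples of e_0, which is exactly what makes
   the bordered matrices Hessenberg.  The theorem keeps the first min(m, n)
   columns of P and Q. *)

Section Householder.
Variables (R : fieldType) (k : nat).
Implicit Types x y w : 'cV[R]_k.

(* For [w = 0] the junk value [2 / 0 = 0] makes this the identity. *)
Definition householder w : 'M[R]_k := 1%:M - (2 / (w^T *m w) 0 0) *: (w *m w^T).

Lemma tr_householder w : (householder w)^T = householder w.
Proof. by rewrite /householder linearB linearZ /= trmx1 trmx_mul trmxK. Qed.

Lemma householder_orthogonal w : (w^T *m w) 0 0 != 0 ->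
  (householder w)^T *m householder w = 1%:M.
Proof.
rewrite tr_householder /householder; set s := _ 0 0 => s_neq0; set a := 2 / s.
have sq : w *m w^T *m (w *m w^T) = s *: (w *m w^T).
  by rewrite mulmxA -(mulmxA w) [w^T *m w]mx11_scalar mul_mx_scalar -scalemxAl.
rewrite mulmxBl mul1mx mulmxBr mulmx1 -scalemxAl -scalemxAr sq !scalerA.
have -> : a * a * s = a + a by rewrite /a; field.
by rewrite scalerDl opprB addrK subrK.
Qed.

Lemma householder_reflect x y : x^T *m x = y^T *m y ->
  ((x - y)^T *m (x - y)) 0 0 != 0 -> householder (x - y) *m x = y.
Proof.
move=> eq_norm; set w := x - y; set s := _ 0 0 => s_neq0.
set c := (w^T *m x) 0 0.
have s_eq : s = 2 * c.
  have tr11 (M : 'M[R]_1) : M^T = M by rewrite [M]mx11_scalar tr_scalar_mx.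
  have sym : x^T *m y = y^T *m x by rewrite -[LHS]tr11 trmx_mul trmxK.
  rewrite /s (_ : w^T *m w = w^T *m x + w^T *m x).
    by rewrite [LHS]mxE -mulr2n mulr_natl.
  by rewrite /w mulmxBr !raddfB /= !mulmxBl sym -eq_norm opprB.
rewrite /householder -/s mulmxBl mul1mx -scalemxAl -mulmxA [w^T *m x]mx11_scalar.
rewrite mul_mx_scalar scalerA -/c mulrAC -s_eq divff // scale1r.
by rewrite /w opprB addrC subrK.
Qed.

End Householder.

Lemma cV_sqnorm_eq0 (R : realDomainType) k (w : 'cV[R]_k) :
  ((w^T *m w) 0 0 == 0) = (w == 0).
Proof.
apply/idP/eqP => [|->]; last by rewrite mulmx0 mxE.
rewrite mxE psumr_eq0 => [/allP w0|i _]; last by rewrite mxE -expr2 sqr_ge0.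
apply/matrixP => i j; rewrite ord1 mxE.
by have /(_ (mem_index_enum i)) := w0 i; rewrite mxE -expr2 sqrf_eq0 => /eqP.
Qed.

Lemma exists_orthogonal_to_e0 (R : rcfType) k (x : 'cV[R]_k.+1) :
  exists2 P : 'M[R]_k.+1, P^T *m P = 1%:M &
    P^T *m x = Num.sqrt ((x^T *m x) 0 0) *: delta_mx 0 0.
Proof.
set y := _ *: _.
have eq_norm : x^T *m x = y^T *m y.
  rewrite /y !linearZ /= -scalemxAl scalerA trmx_delta mul_delta_mx.
  rewrite -expr2 sqr_sqrtr; last first.
    by rewrite mxE sumr_ge0 // => i _; rewrite mxE -expr2 sqr_ge0.
  by apply/matrixP => i j; rewrite !ord1 !mxE eqxx mulr1.
have [<-|neq_xy] := eqVneq x y; first by exists 1%:M; rewrite trmx1 mul1mx.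
have w_neq0 : ((x - y)^T *m (x - y)) 0 0 != 0 by rewrite cV_sqnorm_eq0 subr_eq0.
exists (householder (x - y)); first exact: householder_orthogonal.
by rewrite tr_householder householder_reflect.
Qed.

Section Conjugation.
Variable R : comPzRingType.

Lemma mulmx_orthogonal n (P Q : 'M[R]_n) :
  P^T *m P = 1%:M -> Q^T *m Q = 1%:M -> (P *m Q)^T *m (P *m Q) = 1%:M.
Proof. by move=> Po Qo; rewrite trmx_mul mulmxA -(mulmxA Q^T) Po mulmx1. Qed.

Lemma conjmxM m1 m2 m3 n1 n2 n3 (P : 'M[R]_(m1, m2)) (P' : 'M[R]_(m2, m3))
    (M : 'M[R]_(m1, n1)) (Q : 'M[R]_(n1, n2)) (Q' : 'M[R]_(n2, n3)) :
  (P *m P')^T *m M *m (Q *m Q') = P'^T *m (P^T *m M *m Q) *m Q'.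
Proof. by rewrite trmx_mul !mulmxA. Qed.

Lemma conj_colsub m1 m2 n1 n2 p1 p2 (f : 'I_p1 -> 'I_m2) (g : 'I_p2 -> 'I_n2)
    (P : 'M[R]_(m1, m2)) (M : 'M[R]_(m1, n1)) (Q : 'M[R]_(n1, n2)) :
  (colsub f P)^T *m M *m colsub g Q = mxsub f g (P^T *m M *m Q).
Proof. by rewrite trmx_mxsub mul_rowsub_mx -mxsub_mul. Qed.

Lemma colsub_orthonormal m n p (f : 'I_p -> 'I_n) (P : 'M[R]_(m, n)) :
  injective f -> P^T *m P = 1%:M -> (colsub f P)^T *m colsub f P = 1%:M.
Proof.
move=> f_inj Po; rewrite trmx_mxsub mul_rowsub_mx mulmx_colsub Po.
by apply/matrixP => i j; rewrite !mxE (inj_eq f_inj).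
Qed.

Lemma tr_lift0_mx n (L : 'M[R]_n) : (lift0_mx L)^T = lift0_mx L^T.
Proof. by rewrite /lift0_mx tr_block_mx trmx1 !trmx0. Qed.

Lemma lift0_mx_orthogonal n (L : 'M[R]_n) :
  L^T *m L = 1%:M -> (lift0_mx L)^T *m lift0_mx L = 1%:M.
Proof.
move=> Lo; rewrite tr_lift0_mx /lift0_mx mulmx_block Lo scalar_mx_block.
by rewrite !mul1mx !mulmx0 !mul0mx !add0r !addr0.
Qed.

Lemma mul_lift0_mx_dsubmx0 n (L : 'M[R]_n) (v : 'cV[R]_(1 + n)) :
  dsubmx v = 0 -> lift0_mx L *m v = v.
Proof.
move=> v0; rewrite -[v]vsubmxK mul_block_col v0 !mulmx0 mul1mx mul0mx !addr0.
by rewrite -v0 vsubmxK.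
Qed.

Lemma lift0_mx_conj a b (L : 'M[R]_a) (N : 'M[R]_(1 + a, 1 + b)) (L' : 'M[R]_b) :
  lift0_mx L *m N *m lift0_mx L' =
  block_mx (ulsubmx N) (ursubmx N *m L') (L *m dlsubmx N) (L *m drsubmx N *m L').
Proof.
rewrite /lift0_mx -{1}[N]submxK !mulmx_block.
by rewrite !mul1mx !mulmx1 !mul0mx !mulmx0 !add0r !addr0.
Qed.

End Conjugation.

Section HessenbergBlocks.
Variable R : numDomainType.

Definition nonneg_first_axis m (v : 'cV[R]_m) : Prop :=
  (forall i : 'I_m, (0 < i)%N -> v i 0 = 0) /\
  (forall i : 'I_m, i = 0 :> nat -> 0 <= v i 0).

Definition hessenberg_nonneg a b (M : 'M[R]_(a, b)) : Prop :=
  (forall (i : 'I_a) (j : 'I_b), (j.+1 < i)%N -> M i j = 0) /\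
  (forall (i : 'I_a) (j : 'I_b), i = j.+1 :> nat -> 0 <= M i j).

Lemma hessenberg_nonneg_degenerate a b (M : 'M[R]_(a, b)) :
  a = 0%N \/ b = 0%N -> hessenberg_nonneg M.
Proof.
move=> ab0; suff no_entry (i : 'I_a) (j : 'I_b) : False.
  by split=> i j; case: (no_entry i j).
by case: ab0 i j => [-> []|-> i []].
Qed.

Lemma hessenberg_nonneg_block a b (M : 'M[R]_(1 + a, 1 + b)) :
  nonneg_first_axis (dlsubmx M) -> hessenberg_nonneg (drsubmx M) ->
  hessenberg_nonneg M.
Proof.
move=> [dl0 dl_ge0] [dr0 dr_ge0]; rewrite -[M]submxK.
split=> i j; case: (split_ordP i) => i' ->; rewrite ?ord1 //;
  case: (split_ordP j) => j' ->;
  rewrite ?ord1 /= ?(block_mxEdl, block_mxEdr) !add1n ?ltnS.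
- exact: dl0.
- exact: dr0.
- by case; apply: dl_ge0.
- by case; apply: dr_ge0.
Qed.

Lemma mul_lift0_mx_first_axis n (L : 'M[R]_n) (v : 'cV[R]_(1 + n)) :
  nonneg_first_axis v -> lift0_mx L *m v = v.
Proof.
move=> [v0 _]; apply: mul_lift0_mx_dsubmx0; apply/matrixP => i j.
by rewrite ord1 !mxE v0.
Qed.

Lemma hessenberg_nonneg_lift0_conj a b
    (L : 'M[R]_a) (N : 'M[R]_(1 + a, 1 + b)) (L' : 'M[R]_b) :
  nonneg_first_axis (L *m dlsubmx N) ->
  hessenberg_nonneg (L *m drsubmx N *m L') ->
  hessenberg_nonneg (lift0_mx L *m N *m lift0_mx L').
Proof.
move=> ? ?; apply: hessenberg_nonneg_block;
  by rewrite lift0_mx_conj ?block_mxKdl ?block_mxKdr.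
Qed.

Lemma hessenberg_nonneg_leading_submx a b p
    (le_pa : (p <= a)%N) (le_pb : (p <= b)%N) (M : 'M[R]_(a, b)) :
  hessenberg_nonneg M ->
  upper_hessenberg (mxsub (widen_ord le_pa) (widen_ord le_pb) M) /\
  nonneg_subdiag (mxsub (widen_ord le_pa) (widen_ord le_pb) M).
Proof.
by move=> [M0 M_ge0]; split=> i j ij; rewrite mxE; [apply: M0 | apply: M_ge0].
Qed.

End HessenbergBlocks.

Lemma exists_orthogonal_first_axis (R : rcfType) m (x : 'cV[R]_m) :
  exists2 P : 'M[R]_m, P^T *m P = 1%:M & nonneg_first_axis (P^T *m x).
Proof.
case: m x => [|k] x.
  by exists 1%:M; [rewrite trmx1 mul1mx | split=> -[]].
have [P Po Px] := exists_orthogonal_to_e0 x.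
exists P => //; rewrite Px.
split=> i; rewrite mxE [delta_mx _ _ _ _]mxE eqxx andbT.
  by rewrite -val_eqE eqn0Ngt => ->; rewrite mulr0.
by move=> i0; rewrite (_ : i = 0) ?eqxx ?mulr1 ?sqrtr_ge0 //; apply: val_inj.
Qed.

Lemma exists_joint_hessenberg_nonneg (R : rcfType) m n
    (A : 'M[R]_(m, n)) (B : 'M[R]_(n, m)) (x : 'cV[R]_m) (y : 'cV[R]_n) :
  exists (P : 'M[R]_m) (Q : 'M[R]_n),
    [/\ P^T *m P = 1%:M, Q^T *m Q = 1%:M,
        hessenberg_nonneg (P^T *m A *m Q), hessenberg_nonneg (Q^T *m B *m P) &
        nonneg_first_axis (P^T *m x) /\ nonneg_first_axis (Q^T *m y)].
Proof.
elim: m n A B x y => [|m IH] [|n] A B x y; last first.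
  have [P0 P0o P0x] := exists_orthogonal_first_axis x.
  have [Q0 Q0o Q0y] := exists_orthogonal_first_axis y.
  pose A0 : 'M[R]_(1 + m, 1 + n) := P0^T *m A *m Q0.
  pose B0 : 'M[R]_(1 + n, 1 + m) := Q0^T *m B *m P0.
  have [P1 [Q1 [P1o Q1o hA hB [P1x Q1y]]]] :=
    IH n (drsubmx A0) (drsubmx B0) (dlsubmx A0) (dlsubmx B0).
  exists (P0 *m lift0_mx P1), (Q0 *m lift0_mx Q1); split.
  - by rewrite mulmx_orthogonal // lift0_mx_orthogonal.
  - by rewrite mulmx_orthogonal // lift0_mx_orthogonal.
  - by rewrite conjmxM tr_lift0_mx; apply: hessenberg_nonneg_lift0_conj.
  - by rewrite conjmxM tr_lift0_mx; apply: hessenberg_nonneg_lift0_conj.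
  - by rewrite !trmx_mul !tr_lift0_mx -!mulmxA !mul_lift0_mx_first_axis.
all: have [P Po Px] := exists_orthogonal_first_axis x.
all: have [Q Qo Qy] := exists_orthogonal_first_axis y.
all: exists P, Q; split => //; apply: hessenberg_nonneg_degenerate.
all: by [left | right].
Qed.

Theorem theorem2p1 (R : realType) (m n : nat)
    (A : 'M[R]_(m, n)) (B : 'M[R]_(n, m)) :
  exists (V : 'M[R]_(m, minn m n)) (U : 'M[R]_(n, minn m n))
         (H F : 'M[R]_(minn m n)),
    [/\ V^T *m V = 1%:M, U^T *m U = 1%:M,
        upper_hessenberg H /\ nonneg_subdiag H,
        upper_hessenberg F /\ nonneg_subdiag F &
        V^T *m A *m U = H /\ U^T *m B *m V = F].
Proof.
have [P [Q [Po Qo hA hB _]]] := exists_joint_hessenberg_nonneg A B 0 0.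
pose wm := widen_ord (geq_minl m n); pose wn := widen_ord (geq_minr m n).
have widen_inj p q (le_pq : (p <= q)%N) : injective (widen_ord le_pq).
  by move=> i j /(congr1 val) /= /ord_inj.
exists (colsub wm P), (colsub wn Q).
exists (mxsub wm wn (P^T *m A *m Q)), (mxsub wn wm (Q^T *m B *m P)).
split; try by apply: colsub_orthonormal => //; apply: widen_inj.
- exact: hessenberg_nonneg_leading_submx.
- exact: hessenberg_nonneg_leading_submx.
- by rewrite !conj_colsub.
Qed.
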